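(* Consider an underactuated robotic system with configuration $\mathbf{q}=(\mathbf{q}_1,\mathbf{q}_2)\in\mathcal{Q}$, $\mathbf{q}_1\in\mathcal{Q}_1\subset\mathbb{R}^{n_1}$ (actuated), $\mathbf{q}_2\in\mathcal{Q}_2\subset\mathbb{R}^{n_2}$ (passive), with dynamics $$\begin{bmatrix}\mathbf{D}_{11}(\mathbf{q})&\mathbf{D}_{12}(\mathbf{q})\\ \mathbf{D}_{21}(\mathbf{q})&\mathbf{D}_{22}(\mathbf{q})\end{bmatrix}\begin{bmatrix}\ddot{\mathbf{q}}_1\\ \ddot{\mathbf{q}}_2\end{bmatrix}+\begin{bmatrix}\mathbf{H}_1(\mathbf{q},\dot{\mathbf{q}})\\ \mathbf{H}_2(\mathbf{q},\dot{\mathbf{q}})\end{bmatrix}=\begin{bmatrix}\mathbf{B}_1\\ \mathbf{0}\end{bmatrix}\mathbf{u},\qquad \mathbf{u}\in\mathbb{R}^m,$$ and let $\dot{\mathbf{x}}=\mathbf{f}(\mathbf{x})+\mathbf{g}(\mathbf{x})\mathbf{u}$, $\mathbf{x}=(\mathbf{q},\dot{\mathbf{q}})$, be its control affine form, $\mathbf{f}(\mathbf{x})=(\dot{\mathbf{q}},-\mathbf{D}(\mathbf{q})^{-1}\mathbf{H}(\mathbf{q},\dot{\mathbf{q}}))$, $\mathbf{g}(\mathbf{x})=(\mathbf{0},\mathbf{D}(\mathbf{q})^{-1}\mathbf{B})$. Let $h_{0,1}:\mathcal{Q}_1\to\mathbb{R}$ be continuously differentiable, defining $\mathcal{C}_0=\{\mathbf{q}\in\mathcal{Q}:h_{0,1}(\mathbf{q}_1)\ge0\}$.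 Suppose $\mathbf{B}_1\in\mathbb{R}^{n_1\times m}$ is pseudo-invertible and $\mathbf{k}_{0,1}:\mathcal{Q}_1\to\mathbb{R}^{n_1}$ is continuously differentiable with $\nabla h_{0,1}(\mathbf{q}_1)\cdot\mathbf{k}_{0,1}(\mathbf{q}_1)>-\alpha(h_{0,1}(\mathbf{q}_1))$ for all $\mathbf{q}_1\in\mathcal{Q}_1$, for some extended class $\mathcal{K}_\infty$ function $\alpha$. For $\mu>0$ let $$h(\mathbf{q},\dot{\mathbf{q}})=h_{0,1}(\mathbf{q}_1)-\frac{1}{2\mu}(\dot{\mathbf{q}}_1-\mathbf{k}_{0,1}(\mathbf{q}_1))^\top\bar{\mathbf{D}}_1(\mathbf{q})(\dot{\mathbf{q}}_1-\mathbf{k}_{0,1}(\mathbf{q}_1)),$$ where $\bar{\mathbf{D}}_1(\mathbf{q})=\mathbf{D}_{11}(\mathbf{q})-\mathbf{D}_{12}(\mathbf{q})\mathbf{D}_{22}(\mathbf{q})^{-1}\mathbf{D}_{21}(\mathbf{q})$. Then $h$ is a control barrier function for $\dot{\mathbf{x}}=\mathbf{f}(\mathbf{x})+\mathbf{g}(\mathbf{x})\mathbf{u}$ on $\mathcal{C}=\{(\mathbf{q},\dot{\mathbf{q}}):h(\mathbf{q},\dot{\mathbf{q}})\ge0\}$.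
   Context: $\mathbf{D}(\mathbf{q})$ (the block matrix) is the symmetric positive definite, continuously differentiable inertia matrix, so $\mathbf{D}_{22}$ and the Schur complement $\bar{\mathbf{D}}_1$ are positive definite; $\mathbf{H}=\mathbf{C}\dot{\mathbf{q}}+\mathbf{G}$ collects Coriolis and gravity terms. ''Pseudo-invertible'' is used in the sense that $\mathbf{v}^\top\mathbf{B}_1=\mathbf{0}$ implies $\mathbf{v}=\mathbf{0}$ (full row rank). An extended class $\mathcal{K}_\infty$ function is a continuous strictly increasing $\alpha:\mathbb{R}\to\mathbb{R}$ with $\alpha(0)=0$, $\alpha(s)\to\pm\infty$ as $s\to\pm\infty$. With $L_{\mathbf{f}}h=\nabla h\cdot\mathbf{f}$, $L_{\mathbf{g}}h=\nabla h^\top\mathbf{g}$, a continuously differentiable $h$ is a CBF on $\{h\ge0\}$ if there exists an extended class $\mathcal{K}_\infty$ function $\alpha$ such that for all states $\mathbf{x}$, $\sup_{\mathbf{u}\in\mathbb{R}^m}\{L_{\mathbf{f}}h(\mathbf{x})+L_{\mathbf{g}}h(\mathbf{x})\mathbf{u}\}>-\alpha(h(\mathbf{x}))$. *)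

From HB Require Import structures.
From mathcomp Require Import all_boot all_order all_algebra.
From mathcomp Require Import all_classical all_reals all_analysis.
Set Implicit Arguments. Unset Strict Implicit. Unset Printing Implicit Defensive.
Import Order.TTheory GRing.Theory Num.Theory.
Import numFieldNormedType.Exports.
Local Open Scope classical_set_scope.
Local Open Scope ring_scope.

(* f is continuously differentiable on U: Frechet differentiable at every point
   of U, and every directional derivative x |-> 'd f x v is continuous on U
   (in finite dimension this is continuity of the derivative). *)
Definition C1_on {R : realType} {V W : normedModType R} (U : set V) (f : V -> W)
  : Prop :=
  (forall x, U x -> differentiable f x) /\
  (forall v : V, {within U, continuous (fun x => 'd f x v)}).

Definition ext_class_Kinf {R : realType} (alpha : R -> R) : Prop :=
  continuous alpha /\
  (forall x y, x < y -> alpha x < alpha y) /\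
  alpha 0 = 0 /\
  (alpha x @[x --> +oo] --> +oo) /\
  (alpha x @[x --> -oo] --> -oo).

Definition sym_posdef {R : realType} {n : nat} (M : 'M[R]_n) : Prop :=
  M^T = M /\ forall v : 'cV[R]_n, v != 0 -> 0 < (v^T *m M *m v) 0 0.

(* pseudo-invertible in the sense of full row rank: v^T B1 = 0 -> v = 0 *)
Definition pseudo_invertible {R : realType} {n m : nat} (B : 'M[R]_(n, m)) : Prop :=
  forall v : 'rV[R]_n, v *m B = 0 -> v = 0.

Definition Lie_f {R : realType} {N : nat} (h : 'cV[R]_N -> R)
  (f : 'cV[R]_N -> 'cV[R]_N) (x : 'cV[R]_N) : R := 'd h x (f x).
Definition Lie_g {R : realType} {N m : nat} (h : 'cV[R]_N -> R)
  (g : 'cV[R]_N -> 'M[R]_(N, m)) (x : 'cV[R]_N) (u : 'cV[R]_m) : R :=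
  'd h x (g x *m u).

Definition is_CBF {R : realType} {N m : nat} (X : set 'cV[R]_N)
  (f : 'cV[R]_N -> 'cV[R]_N) (g : 'cV[R]_N -> 'M[R]_(N, m))
  (h : 'cV[R]_N -> R) : Prop :=
  C1_on X h /\
  exists alpha : R -> R, ext_class_Kinf alpha /\
    forall x, X x ->
      ((- alpha (h x))%:E <
        ereal_sup [set (Lie_f h f x + Lie_g h g x u)%:E | u in [set: 'cV[R]_m]])%E.

(* configuration q = col_mx q1 q2 : 'cV_(n1 + n2); state x = col_mx q qdot *)
Definition cfg_dom {R : realType} {n1 n2 : nat} (Q1 : set 'cV[R]_n1)
  (Q2 : set 'cV[R]_n2) : set 'cV[R]_(n1 + n2) :=
  [set q | Q1 (usubmx q) /\ Q2 (dsubmx q)].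

Definition state_dom {R : realType} {n1 n2 : nat} (Q1 : set 'cV[R]_n1)
  (Q2 : set 'cV[R]_n2) : set 'cV[R]_((n1 + n2) + (n1 + n2)) :=
  [set x | cfg_dom Q1 Q2 (usubmx x)].

Definition Dbar1 {R : realType} {n1 n2 : nat} (M : 'M[R]_(n1 + n2)) : 'M[R]_n1 :=
  ulsubmx M - ursubmx M *m invmx (drsubmx M) *m dlsubmx M.

Definition f_sys {R : realType} {n1 n2 : nat}
  (D : 'cV[R]_(n1 + n2) -> 'M[R]_(n1 + n2))
  (H : 'cV[R]_(n1 + n2) -> 'cV[R]_(n1 + n2) -> 'cV[R]_(n1 + n2))
  (x : 'cV[R]_((n1 + n2) + (n1 + n2))) : 'cV[R]_((n1 + n2) + (n1 + n2)) :=
  col_mx (dsubmx x) (- (invmx (D (usubmx x)) *m H (usubmx x) (dsubmx x))).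

Definition g_sys {R : realType} {n1 n2 m : nat}
  (D : 'cV[R]_(n1 + n2) -> 'M[R]_(n1 + n2)) (B1 : 'M[R]_(n1, m))
  (x : 'cV[R]_((n1 + n2) + (n1 + n2))) : 'M[R]_((n1 + n2) + (n1 + n2), m) :=
  col_mx 0 (invmx (D (usubmx x)) *m col_mx B1 (0 : 'M[R]_(n2, m))).

Definition h_cbf {R : realType} {n1 n2 : nat}
  (D : 'cV[R]_(n1 + n2) -> 'M[R]_(n1 + n2))
  (h01 : 'cV[R]_n1 -> R) (k01 : 'cV[R]_n1 -> 'cV[R]_n1) (mu : R)
  (x : 'cV[R]_((n1 + n2) + (n1 + n2))) : R :=
  let q := usubmx x in
  let e := usubmx (dsubmx x) - k01 (usubmx q) in
  h01 (usubmx q) - (2 * mu)^-1 * (e^T *m Dbar1 (D q) *m e) 0 0.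

From HB Require Import structures.
From mathcomp Require Import all_boot all_order all_algebra perm.
From mathcomp Require Import all_classical all_reals all_analysis lra.
Import Order.TTheory GRing.Theory Num.Theory.
Import numFieldNormedType.Exports.
Local Open Scope classical_set_scope.
Local Open Scope ring_scope.

(* Write e := qdot1 - k01 q1 for the velocity error, so that
   h = h01 q1 - (e^T Dbar1 e) / (2 mu).  The input only moves the velocities,
   and along such directions the Schur complement identity
   (D^-1 [B1 u; 0])_1 = Dbar1^-1 B1 u gives L_g h u = - (e^T B1 u) / mu.
   Where e <> 0, pseudo-invertibility of B1 makes u |-> L_g h u a nonzero linear
   form, so sup_u (L_f h + L_g h u) = +oo.  Where e = 0 the quadratic term and
   its differential vanish, so h = h01 q1 and, with u = 0,
   L_f h = grad h01 . k01 > - alpha (h01 q1) = - alpha h.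
   Continuous differentiability of h is checked entrywise, D22^-1 being C^1 by
   Cramer's rule. *)

Definition C1 {R : realType} {V : normedModType R} (U : set V) (f : V -> R) : Prop :=
  (forall x, U x -> differentiable f x) /\
  (forall v x, U x -> {for x, continuous (fun y => 'd f y v)}).

Definition C1mx {R : realType} {V : normedModType R} {a b : nat} (U : set V)
    (M : V -> 'M[R]_(a, b)) : Prop :=
  forall i j, C1 U (fun y => M y i j).

Definition differentiable_entries {R : realType} {V : normedModType R} {a b : nat}
    (M : V -> 'M[R]_(a, b)) (x : V) : Prop :=
  forall i j, differentiable (fun y => M y i j) x.

Definition dmx {R : realType} {V : normedModType R} {a b : nat}
    (M : V -> 'M[R]_(a, b)) (x w : V) : 'M[R]_(a, b) :=
  \matrix_(i, j) 'd (fun y => M y i j) x w.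

Definition mxcoord {R : realType} {m n : nat} (i : 'I_m) (j : 'I_n)
    (M : 'M[R]_(m, n)) : R := M i j.

Fact mxcoord_is_linear {R : realType} {m n} (i : 'I_m) (j : 'I_n) :
  linear (@mxcoord R m n i j).
Proof. by move=> a A B; rewrite /mxcoord !mxE. Qed.

HB.instance Definition _ (R : realType) m n i j :=
  GRing.isLinear.Build R 'M[R]_(m, n) R _ (@mxcoord R m n i j) (mxcoord_is_linear i j).

Section differential.
Context {R : realType} {V : normedModType R}.

Lemma diff_near_eq {W : normedModType R} (f g : V -> W) x :
  (\forall y \near x, f y = g y) -> differentiable g x ->
  differentiable f x /\ 'd f x = 'd g x :> (V -> W).
Proof.
move=> fg dg; have fgx : f x = g x := nbhs_singleton fg.
have shift_x : (fun h : V => h + x) @ (0 : V) --> x.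
  by rewrite -{2}[x]add0r; apply: cvgD; [exact: cvg_id | exact: cvg_cst].
have fg0 : \forall h \near (0 : V), f (h + x) = g (h + x) := shift_x _ fg.
have f_expand : f \o shift x = cst (f x) + 'd g x +o_ (0 : V) id.
  apply/eqaddoP => eps eps0.
  have /eqaddoP/(_ eps eps0) := diff_locally dg.
  by apply: filterS2 fg0 => h fgh /=; rewrite !fctE /= fgh fgx.
have dfg : 'd f x = 'd g x :> (V -> W).
  exact: diff_unique (diff_continuous dg) f_expand.
split=> //; apply/diff_locallyP; rewrite dfg; split=> //; exact: diff_continuous.
Qed.

Lemma differentiable_sumr {I : Type} (r : seq I) (f : I -> V -> R) x :
  (forall i, differentiable (f i) x) ->
  differentiable (fun y => \sum_(i <- r) f i y) x.
Proof.
move=> df; elim: r => [|a r dr].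
  by rewrite (_ : (fun y => _) = cst 0) //; apply/funext => y; rewrite big_nil.
have -> : (fun y => \sum_(i <- a :: r) f i y) = f a + (fun y => \sum_(i <- r) f i y).
  by apply/funext => y; rewrite big_cons.
exact: differentiableD.
Qed.

Lemma diff_sumr {I : Type} (r : seq I) (f : I -> V -> R) x w :
  (forall i, differentiable (f i) x) ->
  'd (fun y => \sum_(i <- r) f i y) x w = \sum_(i <- r) 'd (f i) x w.
Proof.
move=> df; elim: r => [|a r IH].
  rewrite (_ : (fun y => _) = cst 0); last by apply/funext => y; rewrite big_nil.
  by rewrite diff_cst big_nil.
have -> : (fun y => \sum_(i <- a :: r) f i y) = f a + (fun y => \sum_(i <- r) f i y).
  by apply/funext => y; rewrite big_cons.
by rewrite diffD //= ?IH ?big_cons //; exact: differentiable_sumr.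
Qed.

Lemma diff_comp_lin {W : normedModType R} (phi : W -> R) (L : {linear V -> W}) x w :
  continuous L -> differentiable phi (L x) -> 'd (phi \o L) x w = 'd phi (L x) (L w).
Proof. by move=> cL dphi; rewrite diff_comp ?diff_lin //; exact: linear_differentiable. Qed.

End differential.

Section C1_calculus.
Context {R : realType} {V : normedModType R} {U : set V} (oU : open U).

Lemma near_in x : U x -> \forall y \near x, U y.
Proof. by move=> Ux; apply: open_nbhs_nbhs; split. Qed.

Lemma continuous_at_eq_in {F G : V -> R} {x} : U x ->
  (forall y, U y -> F y = G y) -> {for x, continuous G} -> {for x, continuous F}.
Proof.
move=> Ux FG cG; rewrite /prop_for /continuous_at FG //.
apply: cvg_trans cG; apply: near_eq_cvg; near=> y.
by rewrite FG //; near: y; exact: near_in.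
Unshelve. all: by end_near. Qed.

Lemma C1_onE f : C1_on U f <-> C1 U f.
Proof.
rewrite /C1_on /C1; split=> -[df cf]; split=> // v.
  move=> x Ux; move: (cf v).
  by rewrite continuous_open_subspace // => /(_ x); apply; rewrite inE.
by rewrite continuous_open_subspace // => x; rewrite inE; exact: cf.
Qed.

Lemma C1_eq_in {f g : V -> R} : (forall y, U y -> f y = g y) -> C1 U g -> C1 U f.
Proof.
move=> fg [dg cg].
have dfg y : U y -> differentiable f y /\ 'd f y = 'd g y :> (V -> R).
  move=> Uy; apply: diff_near_eq (dg y Uy); near=> z.
  by rewrite fg //; near: z; exact: near_in.
split=> [x Ux|v x Ux]; first exact: (dfg x Ux).1.
by apply: (continuous_at_eq_in Ux _ (cg v x Ux)) => y Uy; rewrite (dfg y Uy).2.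
Unshelve. all: by end_near. Qed.

Lemma C1_cst (c : R) : C1 U (fun=> c).
Proof.
split=> [x _|v x _]; first exact: differentiable_cst.
rewrite (_ : (fun y => _) = cst 0); first exact: cvg_cst.
by apply/funext => y; rewrite (_ : (fun=> c) = cst c) // diff_cst.
Qed.

Lemma C1D {f g : V -> R} : C1 U f -> C1 U g -> C1 U (fun y => f y + g y).
Proof.
move=> [df cf] [dg cg]; rewrite -[fun y => f y + g y]/(f + g).
split=> [x Ux|v x Ux]; first by apply: differentiableD; auto.
apply: (continuous_at_eq_in (G := fun y => 'd f y v + 'd g y v) Ux).
  by move=> y Uy; rewrite diffD; auto.
by apply: cvgD; [exact: cf | exact: cg].
Qed.

Lemma C1N {f : V -> R} : C1 U f -> C1 U (fun y => - f y).
Proof.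
move=> [df cf]; rewrite -[fun y => - f y]/(- f).
split=> [x Ux|v x Ux]; first by apply: differentiableN; auto.
apply: (continuous_at_eq_in (G := fun y => - 'd f y v) Ux).
  by move=> y Uy; rewrite diffN; auto.
by apply: cvgN; exact: cf.
Qed.

Lemma C1M {f g : V -> R} : C1 U f -> C1 U g -> C1 U (fun y => f y * g y).
Proof.
move=> [df cf] [dg cg]; rewrite -[fun y => f y * g y]/(f * g).
split=> [x Ux|v x Ux]; first by apply: differentiableM; auto.
apply: (continuous_at_eq_in (G := fun y => f y * 'd g y v + g y * 'd f y v) Ux).
  by move=> y Uy; rewrite diffM; auto.
apply: cvgD; apply: cvgM; first exact: differentiable_continuous (df x Ux).
- exact: cg.
- exact: differentiable_continuous (dg x Ux).
- exact: cf.
Qed.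

Lemma C1V {f : V -> R} : (forall x, U x -> f x != 0) -> C1 U f -> C1 U (fun y => (f y)^-1).
Proof.
move=> f_neq0 [df cf]; split=> [x Ux|v x Ux]; first by apply: differentiableV; auto.
apply: (continuous_at_eq_in (G := fun y => - (f y) ^- 2 * 'd f y v) Ux).
  by move=> y Uy; rewrite diffV; auto.
apply: cvgM; last exact: cf.
apply: cvgN; apply: cvgV; first by rewrite expf_neq0 ?f_neq0.
by rewrite expr2; apply: cvgM; exact: differentiable_continuous (df x Ux).
Qed.

Lemma C1_sum {I : Type} (r : seq I) (P : pred I) (F : I -> V -> R) :
  (forall i, C1 U (F i)) -> C1 U (fun y => \sum_(i <- r | P i) F i y).
Proof.
move=> C1F; elim: r => [|a r IH].
  by apply: (C1_eq_in _ (C1_cst 0)) => y _; rewrite big_nil.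
case Pa: (P a); last by apply: (C1_eq_in _ IH) => y _; rewrite big_cons Pa.
by apply: (C1_eq_in _ (C1D (C1F a) IH)) => y _; rewrite big_cons Pa.
Qed.

Lemma C1_prod {I : Type} (r : seq I) (P : pred I) (F : I -> V -> R) :
  (forall i, C1 U (F i)) -> C1 U (fun y => \prod_(i <- r | P i) F i y).
Proof.
move=> C1F; elim: r => [|a r IH].
  by apply: (C1_eq_in _ (C1_cst 1)) => y _; rewrite big_nil.
case Pa: (P a); last by apply: (C1_eq_in _ IH) => y _; rewrite big_cons Pa.
by apply: (C1_eq_in _ (C1M (C1F a) IH)) => y _; rewrite big_cons Pa.
Qed.

Lemma C1_lin (L : {linear V -> R}) : continuous L -> C1 U L.
Proof.
move=> cL; split=> [x _|v x _]; first exact: linear_differentiable.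
rewrite (_ : (fun y => _) = cst (L v)); first exact: cst_continuous.
by apply/funext => y; rewrite diff_lin.
Qed.

Lemma C1_comp_lin {W : normedModType R} {Q : set W} {phi : W -> R}
    {L : {linear V -> W}} : continuous L -> (forall y, U y -> Q (L y)) ->
  C1 Q phi -> C1 U (phi \o L).
Proof.
move=> cL UQ [dphi cphi].
have dL y : differentiable L y by exact: linear_differentiable.
have dE v y : U y -> 'd (phi \o L) y v = 'd phi (L y) (L v).
  by move=> Uy; apply/diff_comp_lin/dphi/UQ.
split=> [x Ux|v x Ux]; first exact/differentiable_comp/dphi/UQ.
apply: (continuous_at_eq_in Ux (dE v)).
exact: (continuous_comp (cL x) (cphi (L v) _ (UQ _ Ux))).
Qed.

End C1_calculus.

Section C1_matrix.
Context {R : realType} {V : normedModType R} {U : set V} (oU : open U).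

Lemma C1_on_C1mx {a b} {M : V -> 'M[R]_(a, b)} : C1_on U M -> C1mx U M.
Proof.
move=> [dM cM] i j.
have dcoord (A : 'M[R]_(a, b)) : differentiable (mxcoord i j) A.
  by apply: linear_differentiable; exact: coord_continuous.
have dE v y : U y -> 'd (mxcoord i j \o M) y v = 'd M y v i j.
  by move=> Uy; rewrite diff_comp ?diff_lin //; [exact: coord_continuous | exact: dM].
rewrite -[fun y => M y i j]/(mxcoord i j \o M).
split=> [x Ux|v x Ux]; first exact: differentiable_comp (dM x Ux) (dcoord _).
apply: (continuous_at_eq_in oU Ux (dE v)).
apply: (continuous_comp _ (@coord_continuous _ _ _ i j _)).
by move: (cM v); rewrite continuous_open_subspace // => /(_ x); apply; rewrite inE.
Qed.

Lemma C1mx_lin {a b} {L : {linear V -> 'M[R]_(a, b)}} : continuous L -> C1mx U L.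
Proof.
move=> cL i j; apply: (C1_lin (mxcoord i j \o L)) => x.
by apply: continuous_comp; [exact: cL | exact: coord_continuous].
Qed.

Lemma C1mx_comp_lin {W : normedModType R} {a b} {Q : set W} {Phi : W -> 'M[R]_(a, b)}
    {L : {linear V -> W}} : continuous L -> (forall y, U y -> Q (L y)) ->
  C1mx Q Phi -> C1mx U (Phi \o L).
Proof. by move=> cL UQ CPhi i j; exact: (C1_comp_lin oU cL UQ (CPhi i j)). Qed.

Lemma C1mxD {a b} {M N : V -> 'M[R]_(a, b)} :
  C1mx U M -> C1mx U N -> C1mx U (fun y => M y + N y).
Proof.
by move=> CM CN i j; apply: (C1_eq_in oU _ (C1D oU (CM i j) (CN i j))) => y _; rewrite mxE.
Qed.

Lemma C1mxN {a b} {M : V -> 'M[R]_(a, b)} : C1mx U M -> C1mx U (fun y => - M y).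
Proof. by move=> CM i j; apply: (C1_eq_in oU _ (C1N oU (CM i j))) => y _; rewrite mxE. Qed.

Lemma C1mxB {a b} {M N : V -> 'M[R]_(a, b)} :
  C1mx U M -> C1mx U N -> C1mx U (fun y => M y - N y).
Proof. by move=> CM CN; apply: C1mxD CM (C1mxN CN). Qed.

Lemma C1mxM {a b c} {M : V -> 'M[R]_(a, b)} {N : V -> 'M[R]_(b, c)} :
  C1mx U M -> C1mx U N -> C1mx U (fun y => M y *m N y).
Proof.
move=> CM CN i j; apply: (C1_eq_in oU _ (C1_sum oU (index_enum 'I_b) xpredT
  (fun k y => M y i k * N y k j) (fun k => C1M oU (CM i k) (CN k j)))) => y _.
by rewrite mxE.
Qed.

Lemma C1mx_tr {a b} {M : V -> 'M[R]_(a, b)} : C1mx U M -> C1mx U (fun y => (M y)^T).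
Proof. by move=> CM i j; apply: (C1_eq_in oU _ (CM j i)) => y _; rewrite mxE. Qed.

Section blocks.
Context {a1 a2 b1 b2 : nat} {M : V -> 'M[R]_(a1 + a2, b1 + b2)} (CM : C1mx U M).

Lemma C1mx_ulsub : C1mx U (fun y => ulsubmx (M y)).
Proof.
by move=> i j; apply: (C1_eq_in oU _ (CM (lshift a2 i) (lshift b2 j))) => y _; rewrite !mxE.
Qed.

Lemma C1mx_ursub : C1mx U (fun y => ursubmx (M y)).
Proof.
by move=> i j; apply: (C1_eq_in oU _ (CM (lshift a2 i) (rshift b1 j))) => y _; rewrite !mxE.
Qed.

Lemma C1mx_dlsub : C1mx U (fun y => dlsubmx (M y)).
Proof.
by move=> i j; apply: (C1_eq_in oU _ (CM (rshift a1 i) (lshift b2 j))) => y _; rewrite !mxE.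
Qed.

Lemma C1mx_drsub : C1mx U (fun y => drsubmx (M y)).
Proof.
by move=> i j; apply: (C1_eq_in oU _ (CM (rshift a1 i) (rshift b1 j))) => y _; rewrite !mxE.
Qed.

End blocks.

Lemma C1_det {n} {M : V -> 'M[R]_n} : C1mx U M -> C1 U (fun y => \det (M y)).
Proof.
move=> CM; apply: (C1_eq_in oU (fun y _ => erefl) (C1_sum oU (index_enum 'S_n) xpredT _
  (fun s => C1M oU (C1_cst ((-1) ^+ s))
     (C1_prod oU (index_enum 'I_n) xpredT _ (fun i => CM i (s i)))))).
Qed.

Lemma C1mx_adj {n} {M : V -> 'M[R]_n} : C1mx U M -> C1mx U (fun y => \adj (M y)).
Proof.
case: n M => [|n] M CM i j; first by case: i.
have Cminor : C1mx U (fun y => row' j (col' i (M y))).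
  by move=> k l; apply: (C1_eq_in oU _ (CM (lift j k) (lift i l))) => y _; rewrite !mxE.
apply: (C1_eq_in oU _ (C1M oU (C1_cst ((-1) ^+ (j + i))) (C1_det Cminor))) => y _.
by rewrite mxE.
Qed.

Lemma C1mx_inv {n} {M : V -> 'M[R]_n} : (forall y, U y -> M y \in unitmx) ->
  C1mx U M -> C1mx U (fun y => invmx (M y)).
Proof.
move=> Munit CM i j.
have Cdet_inv : C1 U (fun y => (\det (M y))^-1).
  apply: (C1V oU (f := fun y => \det (M y))) (C1_det CM) => y Uy.
  by rewrite -unitfE -unitmxE; exact: Munit.
apply: (C1_eq_in oU _ (C1M oU Cdet_inv (C1mx_adj CM i j))) => y Uy.
by rewrite /invmx Munit // mxE.
Qed.

End C1_matrix.

Section matrix_differential.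
Context {R : realType} {V : normedModType R}.

Lemma C1mx_differentiable {a b} {U : set V} {M : V -> 'M[R]_(a, b)} {x} :
  C1mx U M -> U x -> differentiable_entries M x.
Proof. by move=> CM Ux i j; exact: (CM i j).1. Qed.

Lemma dmx_comp_lin {W : normedModType R} {a b} (Phi : W -> 'M[R]_(a, b))
    (L : {linear V -> W}) x w : continuous L -> differentiable_entries Phi (L x) ->
  dmx (Phi \o L) x w = dmx Phi (L x) (L w).
Proof.
move=> cL dPhi; apply/matrixP => i j; rewrite !mxE.
exact: (diff_comp_lin _ _ _ _ cL (dPhi i j)).
Qed.

Lemma dmx_lin {a b} (L : {linear V -> 'M[R]_(a, b)}) x w :
  continuous L -> dmx L x w = L w.
Proof.
move=> cL; apply/matrixP => i j.
rewrite mxE -[fun y => L y i j]/(mxcoord i j \o L) diff_lin //.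
by move=> y; apply: continuous_comp; [exact: cL | exact: coord_continuous].
Qed.

Lemma dmx0 {a b} (M : V -> 'M[R]_(a, b)) x : dmx M x 0 = 0.
Proof. by apply/matrixP => i j; rewrite !mxE linear0. Qed.

Lemma dmxB {a b} (M N : V -> 'M[R]_(a, b)) x w :
  differentiable_entries M x -> differentiable_entries N x ->
  dmx (fun y => M y - N y) x w = dmx M x w - dmx N x w.
Proof.
move=> dM dN; apply/matrixP => i j; rewrite !mxE.
have -> : (fun y => (M y - N y) i j) = (fun y => M y i j) - (fun y => N y i j).
  by apply/funext => y; rewrite !mxE.
by rewrite diffB.
Qed.

Lemma differentiable_entries_tr {a b} {M : V -> 'M[R]_(a, b)} {x} :
  differentiable_entries M x -> differentiable_entries (fun y => (M y)^T) x.
Proof.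
move=> dM i j; have -> : (fun y => (M y)^T i j) = fun y => M y j i.
  by apply/funext => y; rewrite mxE.
exact: dM.
Qed.

Lemma dmx_tr {a b} (M : V -> 'M[R]_(a, b)) x w :
  dmx (fun y => (M y)^T) x w = (dmx M x w)^T.
Proof.
apply/matrixP => i j; rewrite !mxE.
by congr ('d _ x w); apply/funext => y; rewrite mxE.
Qed.

Lemma differentiable_entries_mulmx {a b c} {M : V -> 'M[R]_(a, b)}
    {N : V -> 'M[R]_(b, c)} {x} :
  differentiable_entries M x -> differentiable_entries N x ->
  differentiable_entries (fun y => M y *m N y) x.
Proof.
move=> dM dN i j.
have -> : (fun y => (M y *m N y) i j) =
    fun y => \sum_k ((fun y => M y i k) * (fun y => N y k j)) y.
  by apply/funext => y; rewrite mxE.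
by apply: differentiable_sumr => k; exact: differentiableM.
Qed.

Lemma dmxM {a b c} (M : V -> 'M[R]_(a, b)) (N : V -> 'M[R]_(b, c)) x w :
  differentiable_entries M x -> differentiable_entries N x ->
  dmx (fun y => M y *m N y) x w = dmx M x w *m N x + M x *m dmx N x w.
Proof.
move=> dM dN; apply/matrixP => i j; rewrite !mxE.
have -> : (fun y => (M y *m N y) i j) =
    fun y => \sum_k ((fun y => M y i k) * (fun y => N y k j)) y.
  by apply/funext => y; rewrite mxE.
rewrite diff_sumr => [|k]; last exact: differentiableM.
rewrite -big_split /=; apply: eq_bigr => k _.
by rewrite diffM // !fctE !mxE addrC; congr (_ + _); exact: mulrC.
Qed.

Lemma dmx_quadform {n} (E : V -> 'cV[R]_n) (M : V -> 'M[R]_n) x w :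
  differentiable_entries E x -> differentiable_entries M x ->
  dmx (fun y => (E y)^T *m M y *m E y) x w =
  (dmx E x w)^T *m M x *m E x + (E x)^T *m dmx M x w *m E x +
  (E x)^T *m M x *m dmx E x w.
Proof.
move=> dE dM; have dEt := differentiable_entries_tr dE.
rewrite dmxM //; last exact: differentiable_entries_mulmx.
by rewrite dmxM // dmx_tr mulmxDl.
Qed.

End matrix_differential.

Definition pos_quadform {R : numFieldType} {n} (A : 'M[R]_n) : Prop :=
  forall v : 'cV[R]_n, v != 0 -> 0 < (v^T *m A *m v) 0 0.

Lemma pos_quadform_unitmx {R : numFieldType} {n} (A : 'M[R]_n) :
  pos_quadform A -> A \in unitmx.
Proof.
move=> posA; rewrite unitmxE unitfE; apply/negP => /det0P[r r_neq0 rA].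
have rT_neq0 : r^T != 0 by apply: contra r_neq0 => /eqP r0; rewrite -[r]trmxK r0 trmx0.
by have := posA _ rT_neq0; rewrite trmxK rA mul0mx mxE ltxx.
Qed.

Lemma pos_quadform_drsubmx {R : numFieldType} {n1 n2} (A : 'M[R]_(n1 + n2)) :
  pos_quadform A -> pos_quadform (drsubmx A).
Proof.
move=> posA v v_neq0.
have -> : v^T *m drsubmx A *m v = (col_mx 0 v)^T *m A *m col_mx 0 v.
  rewrite -{2}[A]submxK tr_col_mx trmx0 mul_row_block !mul0mx !add0r.
  by rewrite mul_row_col mulmx0 add0r.
by apply: posA; rewrite col_mx_eq0 negb_and v_neq0 orbT.
Qed.

Lemma Dbar1_tr {R : realType} {n1 n2} (A : 'M[R]_(n1 + n2)) :
  A^T = A -> (Dbar1 A)^T = Dbar1 A.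
Proof.
move=> A_sym; rewrite /Dbar1 linearB /= !trmx_mul trmx_inv.
by rewrite trmx_ulsub trmx_ursub trmx_dlsub trmx_drsub A_sym mulmxA.
Qed.

(* The top-left block of [invmx A] is the inverse of the Schur complement. *)
Lemma Dbar1_usubmx_invmx {R : realType} {n1 n2} (A : 'M[R]_(n1 + n2)) (v : 'cV[R]_n1) :
  A \in unitmx -> drsubmx A \in unitmx ->
  Dbar1 A *m usubmx (invmx A *m col_mx v (0 : 'cV[R]_n2)) = v.
Proof.
move=> A_unit Adr_unit; set z := invmx A *m col_mx v 0.
have : A *m z = col_mx v 0 by rewrite /z mulmxA mulmxV // mul1mx.
rewrite -{1}[A]submxK -{1}[z]vsubmxK mul_block_col => /eq_col_mx[top bot].
have dz : dsubmx z = - (invmx (drsubmx A) *m dlsubmx A *m usubmx z).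
  rewrite -(mulKmx Adr_unit (dsubmx z)) -mulmxA -mulmxN; congr (_ *m _).
  by apply/eqP; rewrite -addr_eq0 addrC bot.
by rewrite -top dz mulmxN /Dbar1 mulmxBl !mulmxA.
Qed.

Lemma bilin_form_sym {R : comRingType} {n} (M : 'M[R]_n) (a b : 'cV[R]_n) :
  M^T = M -> (a^T *m M *m b) 0 0 = (b^T *m M *m a) 0 0.
Proof.
move=> M_sym; rewrite -[in RHS](trmxK a) -[in RHS]M_sym -!trmx_mul [in RHS]mxE.
by rewrite mulmxA.
Qed.

Lemma rV_mul_tr_gt0 {R : realFieldType} {m} (r : 'rV[R]_m) : r != 0 -> 0 < (r *m r^T) 0 0.
Proof.
move=> r_neq0; rewrite mxE lt_def; apply/andP; split; last first.
  by apply: sumr_ge0 => k _; rewrite mxE -expr2 sqr_ge0.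
apply: contra r_neq0 => /eqP sum0; apply/eqP/matrixP => i k.
have sq_ge0 (l : 'I_m) : true -> 0 <= r 0 l * r^T l 0 by rewrite mxE -expr2 sqr_ge0.
have := @psumr_eq0P _ _ _ _ sq_ge0 sum0 k isT.
by rewrite !mxE (ord1 i) => /eqP; rewrite mulf_eq0 orbb => /eqP.
Qed.

Lemma continuous_usubmx {R : numFieldType} {m1 m2 n} :
  continuous (usubmx : 'M[R]_(m1 + m2, n) -> 'M[R]_(m1, n)).
Proof.
move=> u A /nbhs_ballP[e /= e0 eA].
apply/nbhs_ballP; exists e => //= v [_ uv]; apply: eA; split => // i j.
by apply: (le_lt_trans _ (uv (lshift m2 i) j)); rewrite !mxE.
Qed.

Lemma continuous_dsubmx {R : numFieldType} {m1 m2 n} :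
  continuous (dsubmx : 'M[R]_(m1 + m2, n) -> 'M[R]_(m2, n)).
Proof.
move=> u A /nbhs_ballP[e /= e0 eA].
apply/nbhs_ballP; exists e => //= v [_ uv]; apply: eA; split => // i j.
by apply: (le_lt_trans _ (uv (rshift m1 i) j)); rewrite !mxE.
Qed.

Lemma open_cfg_dom {R : realType} {n1 n2} {Q1 : set 'cV[R]_n1} {Q2 : set 'cV[R]_n2} :
  open Q1 -> open Q2 -> open (cfg_dom Q1 Q2).
Proof.
move=> oQ1 oQ2; rewrite (_ : cfg_dom _ _ = usubmx @^-1` Q1 `&` dsubmx @^-1` Q2) //.
apply: openI; apply: open_comp => // q _.
  exact: continuous_usubmx.
exact: continuous_dsubmx.
Qed.

Lemma open_state_dom {R : realType} {n1 n2} {Q1 : set 'cV[R]_n1} {Q2 : set 'cV[R]_n2} :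
  open Q1 -> open Q2 -> open (state_dom Q1 Q2).
Proof.
move=> oQ1 oQ2; rewrite (_ : state_dom _ _ = usubmx @^-1` cfg_dom Q1 Q2) //.
by apply: open_comp (open_cfg_dom oQ1 oQ2) => x _; exact: continuous_usubmx.
Qed.

Lemma Lie_gZ {R : realType} {N m} (h : 'cV[R]_N -> R) (g : 'cV[R]_N -> 'M[R]_(N, m)) x t u :
  Lie_g h g x (t *: u) = t * Lie_g h g x u.
Proof. by rewrite /Lie_g -scalemxAr linearZ. Qed.

Lemma lt_ereal_sup_affine {R : realType} {U : lmodType R} (ell : U -> R) (a b : R) :
  (forall t u, ell (t *: u) = t * ell u) -> a < b \/ (exists u, ell u != 0) ->
  (a%:E < ereal_sup [set (b + ell u)%:E | u in [set: U]])%E.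
Proof.
move=> ellZ [ab | [u ellu]].
  apply: (@lt_le_trans _ _ (b + ell 0)%:E); last by apply: ereal_sup_ubound; exists 0.
  by rewrite -(scale0r 0) ellZ mul0r addr0 lte_fin.
pose t := (a - b + 1) / ell u.
apply: (@lt_le_trans _ _ (b + ell (t *: u))%:E).
  by rewrite lte_fin ellZ /t divfK //; lra.
by apply: ereal_sup_ubound; exists (t *: u).
Qed.

Lemma g_sys_usubmx {R : realType} {n1 n2 m} (D : 'cV[R]_(n1 + n2) -> 'M[R]_(n1 + n2))
    (B1 : 'M[R]_(n1, m)) x (u : 'cV[R]_m) :
  usubmx (g_sys D B1 x *m u) = 0.
Proof. by rewrite /g_sys mul_col_mx col_mxKu mul0mx. Qed.

Lemma g_sys_dsubmx {R : realType} {n1 n2 m} (D : 'cV[R]_(n1 + n2) -> 'M[R]_(n1 + n2))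
    (B1 : 'M[R]_(n1, m)) x (u : 'cV[R]_m) :
  dsubmx (g_sys D B1 x *m u) = invmx (D (usubmx x)) *m col_mx (B1 *m u) 0.
Proof. by rewrite /g_sys mul_col_mx col_mxKd -mulmxA mul_col_mx mul0mx. Qed.

Section underactuated_CBF.
Context {R : realType} {n1 n2 : nat} {Q1 : set 'cV[R]_n1} {Q2 : set 'cV[R]_n2}
  {D : 'cV[R]_(n1 + n2) -> 'M[R]_(n1 + n2)}
  {h01 : 'cV[R]_n1 -> R} {k01 : 'cV[R]_n1 -> 'cV[R]_n1} {mu : R}.
Hypotheses (oQ1 : open Q1) (oQ2 : open Q2) (D_C1 : C1_on (cfg_dom Q1 Q2) D)
  (D_posdef : forall q, cfg_dom Q1 Q2 q -> sym_posdef (D q))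
  (h01_C1 : C1_on Q1 h01) (k01_C1 : C1_on Q1 k01).

Local Notation state := 'cV[R]_((n1 + n2) + (n1 + n2)).
Local Notation X := (state_dom Q1 Q2).
Local Notation h := (h_cbf D h01 k01 mu).

Definition vel_err (x : state) : 'cV[R]_n1 :=
  usubmx (dsubmx x) - k01 (usubmx (usubmx x)).

Definition Dbar (x : state) : 'M[R]_n1 := Dbar1 (D (usubmx x)).

Let oQ := open_cfg_dom oQ1 oQ2.
Let oX := open_state_dom oQ1 oQ2.

Let cont_q : continuous (usubmx : state -> 'cV[R]_(n1 + n2)).
Proof. exact: continuous_usubmx. Qed.

Let cont_q1 : continuous (usubmx \o usubmx : state -> 'cV[R]_n1).
Proof. by move=> x; apply: continuous_comp; exact: continuous_usubmx. Qed.

Let cont_qdot1 : continuous (usubmx \o dsubmx : state -> 'cV[R]_n1).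
Proof.
by move=> x; apply: continuous_comp; [exact: continuous_dsubmx | exact: continuous_usubmx].
Qed.

Let X_Q1 x : X x -> Q1 (usubmx (usubmx x)). Proof. by case. Qed.

Let C1_h01q1 : C1 X (h01 \o (usubmx \o usubmx)).
Proof. exact: (C1_comp_lin oX cont_q1 X_Q1 ((C1_onE oQ1 h01).1 h01_C1)). Qed.

Let C1mx_k01q1 : C1mx X (k01 \o (usubmx \o usubmx)).
Proof. exact: (C1mx_comp_lin oX cont_q1 X_Q1 (C1_on_C1mx oQ1 k01_C1)). Qed.

Lemma Dbar1_C1 : C1mx (cfg_dom Q1 Q2) (fun q => Dbar1 (D q)).
Proof.
have CD := C1_on_C1mx oQ D_C1.
have Ddr_unit q : cfg_dom Q1 Q2 q -> drsubmx (D q) \in unitmx.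
  by move=> /D_posdef[_ posD]; exact/pos_quadform_unitmx/pos_quadform_drsubmx.
rewrite /Dbar1; apply: (C1mxB oQ (C1mx_ulsub oQ CD)).
apply: (C1mxM oQ); last exact: (C1mx_dlsub oQ CD).
exact: (C1mxM oQ (C1mx_ursub oQ CD) (C1mx_inv oQ Ddr_unit (C1mx_drsub oQ CD))).
Qed.

Lemma Dbar_C1 : C1mx X Dbar.
Proof. exact: (C1mx_comp_lin oX cont_q (fun _ Xy => Xy) Dbar1_C1). Qed.

Lemma vel_err_C1 : C1mx X vel_err.
Proof.
by rewrite /vel_err; apply: (C1mxB oX (C1mx_lin cont_qdot1) C1mx_k01q1).
Qed.

Lemma h_cbf_C1 : C1 X h.
Proof.
have Cquad := C1mxM oX (C1mxM oX (C1mx_tr oX vel_err_C1) Dbar_C1) vel_err_C1 0 0.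
by apply: (C1_eq_in oX _ (C1D oX C1_h01q1 (C1N oX (C1M oX (C1_cst _) Cquad)))) => y _.
Qed.

Lemma diff_h_cbf x w : X x ->
  'd h x w = 'd h01 (usubmx (usubmx x)) (usubmx (usubmx w)) - (2 * mu)^-1 *
    ((dmx vel_err x w)^T *m Dbar x *m vel_err x +
     (vel_err x)^T *m dmx Dbar x w *m vel_err x +
     (vel_err x)^T *m Dbar x *m dmx vel_err x w) 0 0.
Proof.
move=> Xx; pose quad y := ((vel_err y)^T *m Dbar y *m vel_err y) 0 0.
have dE := C1mx_differentiable vel_err_C1 Xx.
have dDbar := C1mx_differentiable Dbar_C1 Xx.
have dquad : differentiable quad x.
  exact: differentiable_entries_mulmx (differentiable_entries_mulmx
    (differentiable_entries_tr dE) dDbar) dE 0 0.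
have -> : h = h01 \o (usubmx \o usubmx) - (2 * mu)^-1 *: quad by [].
rewrite diffB ?diffZ //=; [|exact: C1_h01q1.1 | exact: differentiableZ].
rewrite (diff_comp_lin _ _ _ _ cont_q1); last exact/((C1_onE oQ1 h01).1 h01_C1).1/X_Q1.
by rewrite -dmx_quadform // mxE.
Qed.

Lemma dmx_Dbar_vel {x w} : X x -> usubmx w = 0 -> dmx Dbar x w = 0.
Proof.
move=> Xx w_vel; rewrite (dmx_comp_lin (fun q => Dbar1 (D q)) usubmx) //.
  by rewrite [X in dmx _ _ X](_ : _ = 0) ?dmx0.
exact: (C1mx_differentiable Dbar1_C1 Xx).
Qed.

Lemma dmx_vel_err_vel {x w} : X x -> usubmx w = 0 -> dmx vel_err x w = usubmx (dsubmx w).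
Proof.
move=> Xx w_vel; rewrite /vel_err dmxB; last first.
- exact: (C1mx_differentiable C1mx_k01q1 Xx).
- exact: (C1mx_differentiable (C1mx_lin cont_qdot1) Xx).
rewrite (dmx_lin (usubmx \o dsubmx)) // (dmx_comp_lin k01 (usubmx \o usubmx)) //;
  last exact: (C1mx_differentiable (C1_on_C1mx oQ1 k01_C1) (X_Q1 _ Xx)).
by rewrite [X in dmx _ _ X](_ : _ = 0) ?dmx0 ?subr0 //= w_vel linear0.
Qed.

Lemma h_cbf_vel_err0 x : vel_err x = 0 -> h x = h01 (usubmx (usubmx x)).
Proof.
rewrite /h_cbf /= -[usubmx (dsubmx x) - _]/(vel_err x) => ->.
by rewrite mulmx0 mxE mulr0 subr0.
Qed.

Lemma Lie_f_h_cbf_vel_err0 (H : 'cV[R]_(n1 + n2) -> 'cV[R]_(n1 + n2) -> 'cV[R]_(n1 + n2)) x :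
  X x -> vel_err x = 0 ->
  Lie_f h (f_sys D H) x = 'd h01 (usubmx (usubmx x)) (k01 (usubmx (usubmx x))).
Proof.
move=> Xx e0; rewrite /Lie_f diff_h_cbf // e0 trmx0 !mulmx0 !mul0mx !addr0 mxE mulr0 subr0.
by rewrite /f_sys col_mxKu; move/eqP: e0; rewrite subr_eq0 => /eqP ->.
Qed.

Lemma Lie_g_h_cbf m (B1 : 'M[R]_(n1, m)) x u : X x ->
  Lie_g h (g_sys D B1) x u = - mu^-1 * ((vel_err x)^T *m B1 *m u) 0 0.
Proof.
move=> Xx; rewrite /Lie_g diff_h_cbf //.
have w_vel := g_sys_usubmx D B1 x u.
rewrite w_vel linear0 (dmx_Dbar_vel Xx w_vel) (dmx_vel_err_vel Xx w_vel) g_sys_dsubmx.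
have [D_sym D_pos] := D_posdef _ Xx.
set a := usubmx (invmx _ *m _).
have Dbar_a : Dbar x *m a = B1 *m u.
  rewrite /Dbar /a; apply: Dbar1_usubmx_invmx; first exact: pos_quadform_unitmx.
  exact/pos_quadform_unitmx/pos_quadform_drsubmx.
rewrite mulmx0 mul0mx addr0 mxE (bilin_form_sym _ _ _ (Dbar1_tr _ D_sym)).
rewrite -/(Dbar x) -(mulmxA _ (Dbar x)) Dbar_a mulmxA linear0 sub0r invfM mulNr.
by rewrite [_ * mu^-1]mulrC -mulrA; congr (- (_ * _)); lra.
Qed.

End underactuated_CBF.

Arguments vel_err {R n1 n2} k01 x.

Theorem theorem10 (R : realType) (n1 n2 m : nat)
  (Q1 : set 'cV[R]_n1) (Q2 : set 'cV[R]_n2)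
  (D : 'cV[R]_(n1 + n2) -> 'M[R]_(n1 + n2))
  (H : 'cV[R]_(n1 + n2) -> 'cV[R]_(n1 + n2) -> 'cV[R]_(n1 + n2))
  (B1 : 'M[R]_(n1, m))
  (h01 : 'cV[R]_n1 -> R) (k01 : 'cV[R]_n1 -> 'cV[R]_n1)
  (alpha : R -> R) (mu : R) :
  open Q1 -> open Q2 ->
  C1_on (cfg_dom Q1 Q2) D ->
  (forall q, cfg_dom Q1 Q2 q -> sym_posdef (D q)) ->
  pseudo_invertible B1 ->
  C1_on Q1 h01 ->
  C1_on Q1 k01 ->
  ext_class_Kinf alpha ->
  (forall q1, Q1 q1 -> - alpha (h01 q1) < 'd h01 q1 (k01 q1)) ->
  0 < mu ->
  is_CBF (state_dom Q1 Q2) (f_sys D H) (g_sys D B1) (h_cbf D h01 k01 mu).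
Proof.
move=> oQ1 oQ2 D_C1 D_posdef B1_pinv h01_C1 k01_C1 alpha_Kinf h01_k01 mu_gt0.
split; first by apply/(C1_onE (open_state_dom oQ1 oQ2)); apply: h_cbf_C1.
exists alpha; split=> // x Xx.
apply: lt_ereal_sup_affine; first exact: Lie_gZ.
have [e0 | e_neq0] := eqVneq (vel_err k01 x) 0.
  by left; rewrite h_cbf_vel_err0 // (Lie_f_h_cbf_vel_err0 oQ1 oQ2) //; apply/h01_k01/Xx.1.
right; exists ((vel_err k01 x)^T *m B1)^T.
rewrite (Lie_g_h_cbf oQ1 oQ2) // mulf_neq0 ?oppr_eq0 ?invr_eq0 ?gt_eqF // rV_mul_tr_gt0 //.
apply: contra e_neq0 => /eqP /B1_pinv /(congr1 trmx).
by rewrite trmxK trmx0 => ->.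
Qed.
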